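(* Let $q\in\mathbb{C}$ with $0<|q|<1$ and $l,m,n,u\in\mathbb{N}$. Then \[ \sum_{k=0}^\infty\frac{q^{k^2} (q)_{l+m+n-k}} {(q)_k (q)_{l-k}(q)_{m-k}(q)_{n-k} (q)_{u+k}} =\sum_{k=-\infty}^\infty\frac{(-1)^k q^{(5k^2-k)/2} (q)_{l+m}(q)_{l+n}(q)_{m+n}(q)_u} {(q)_{l-k}(q)_{m-k}(q)_{n-k}(q)_{u-k}(q)_{l+k}(q)_{m+k}(q)_{n+k}(q)_{u+k}}, \] and \[ \sum_{k=0}^\infty\frac{q^{k^2+k} (q)_{l+m+n-k+1}} {(q)_k (q)_{l-k}(q)_{m-k}(q)_{n-k}(q)_{u+k+1}} =\sum_{k=-\infty}^\infty\frac{(-1)^k q^{(5k^2+3k)/2} (q)_{l+m+1}(q)_{l+n+1}(q)_{m+n+1}(q)_u} {(q)_{l-k}(q)_{m-k}(q)_{n-k}(q)_{u-k}(q)_{l+k+1}(q)_{m+k+1}(q)_{n+k+1}(q)_{u+k+1}}. \]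
   Context: $(q)_n=(q;q)_n=(1-q)(1-q^2)\cdots(1-q^n)$ for $n\ge0$ (with $(q)_0=1$), and $1/(q)_n=0$ for $n<0$. *)

From HB Require Import structures.
From mathcomp Require Import all_boot all_order all_algebra.
From mathcomp Require Import complex.
From mathcomp Require Import reals.
Set Implicit Arguments. Unset Strict Implicit. Unset Printing Implicit Defensive.
Import Order.TTheory GRing.Theory Num.Theory.
Local Open Scope ring_scope.

Definition qpoch {F : comRingType} (q : F) (n : nat) : F :=
  \prod_(1 <= j < n.+1) (1 - q ^+ j).

(* 1/(q)_n for an integer n, with the convention 1/(q)_n = 0 for n < 0 *)
Definition qpinv {F : fieldType} (q : F) (n : int) : F :=
  match n with
  | Posz k => (qpoch q k)^-1
  | Negz _ => 0
  end.

(* (q)_n for an integer index n >= 0 (only used at nonnegative indices) *)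
Definition qpochz {F : comRingType} (q : F) (n : int) : F :=
  match n with
  | Posz k => qpoch q k
  | Negz _ => 1
  end.

Definition zsum {F : nmodType} (N : nat) (f : int -> F) : F :=
  \sum_(0 <= i < (2 * N).+1) f (i%:Z - N%:Z).

From HB Require Import structures.
From mathcomp Require Import all_boot all_order all_algebra.
From mathcomp Require Import complex.
From mathcomp Require Import reals.
From mathcomp Require Import ring zify.
Set Implicit Arguments. Unset Strict Implicit. Unset Printing Implicit Defensive.
Import Order.TTheory GRing.Theory Num.Theory.
Local Open Scope ring_scope.

(* Both identities are the cases e = 0, 1 of one identity.  Expand
   1/((q)_k (q)_{u+k+e}) as (q)_u times the sum over r in Z of
   (-1)^r q^{C(r,2) + r^2 + e r} / ((q)_{u-r} (q)_{u+r+e} (q)_{k-r} (q)_{k+r+e}):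
   this Bailey pair comes from the q-Chu-Vandermonde sum inverted by the
   orthogonality sum_r (-1)^r q^{C(r,2)} / ((q)_{j-r} (q)_{j+r+e}) = [j = 0],
   a case of the q-binomial theorem.  Inserting it into the left-hand side and
   exchanging the sums, the sum over k becomes a q-Pfaff-Saalschutz sum, which
   yields the remaining factors, and C(r,2) + 2(r^2 + e r) is (5r^2 - r)/2 for
   e = 0 and (5r^2 + 3r)/2 for e = 1.  Both classical summations are proved by
   creative telescoping in one of their parameters. *)

Definition bin2z (r : int) : int :=
  match r with Posz n => 'C(n, 2)%:Z | Negz n => 'C(n.+2, 2)%:Z end.

Lemma bin2zM2 r : bin2z r * 2 = r * (r - 1).
Proof.
case: r => n /=; last rewrite NegzE.
- by have := mul_bin_diag n 1; rewrite bin1; set C := 'C(n, 2) => ?; nia.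
- by have := mul_bin_diag n.+2 1; rewrite bin1; set C := 'C(n.+2, 2) => ?; nia.
Qed.

Lemma bin2z_unique r y : y * 2 = r * (r - 1) -> bin2z r = y.
Proof. by move=> ry; apply: (@mulIf _ 2) => //; rewrite bin2zM2 ry. Qed.

Lemma bin2zB (j i : nat) : bin2z (j%:Z - i%:Z) = bin2z j + 'C(i, 2)%:Z + i%:Z * (1 - j%:Z).
Proof.
apply: bin2z_unique; rewrite !mulrDl bin2zM2 -[('C(i, 2))%:Z]/(bin2z i) bin2zM2.
ring.
Qed.

Lemma bin2z_divz a r : ((r * (r - 1) + a * 2) %/ 2)%Z = bin2z r + a.
Proof. by rewrite -bin2zM2 -mulrDl mulzK. Qed.

Lemma big_nat_trunc (V : nmodType) (f : nat -> V) (K M : nat) :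
  (K <= M)%N -> (forall j, (K <= j)%N -> f j = 0) ->
  \sum_(0 <= j < M) f j = \sum_(0 <= j < K) f j.
Proof.
move=> KM fK; rewrite (big_cat_nat (leq0n K) KM) /= [X in _ + X]big_nat_cond.
by rewrite [X in _ + X]big1 ?addr0 // => j /andP[/andP[/fK]].
Qed.

Lemma big_nat_shift (V : nmodType) (f : nat -> V) (t M : nat) :
  (t <= M)%N -> (forall j, (j < t)%N -> f j = 0) ->
  \sum_(0 <= j < M) f j = \sum_(0 <= i < M - t) f (t + i)%N.
Proof.
move=> tM ft; rewrite (big_cat_nat (leq0n t) tM) /= big_nat_cond big1 ?add0r.
  by rewrite -{1}(add0n t) big_addn; apply: eq_bigr => i _; rewrite addnC.
by move=> j /andP[/andP[_ /ft]].
Qed.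

Lemma creative_telescoping (R : pzRingType) (a b : R) (s s' g : nat -> R) (M : nat) :
  (forall j, a * s' j - b * s j = g j.+1 - g j) -> g 0%N = 0 -> g M = 0 ->
  a * \sum_(0 <= j < M) s' j = b * \sum_(0 <= j < M) s j.
Proof.
move=> tele g0 gM; apply/eqP; rewrite -subr_eq0 !mulr_sumr -sumrB.
by rewrite (eq_bigr _ (fun j _ => tele j)) telescope_sumr // gM g0 subrr.
Qed.

Lemma int_reflect_ind (e : nat) (Q : int -> Prop) : (e <= 1)%N ->
  (forall t : nat, Q t%:Z) -> (forall r : int, Q (- r - e%:Z) -> Q r) -> forall r, Q r.
Proof.
move=> e1 Qnat Qrefl [t|n]; first exact: Qnat.
by apply: Qrefl; rewrite (_ : _ - _ = (n.+1 - e)%N%:Z) ?NegzE //; lia.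
Qed.

Lemma eq_zsum (V : nmodType) N (f g : int -> V) :
  (forall r, f r = g r) -> zsum N f = zsum N g.
Proof. by move=> fg; apply: eq_bigr. Qed.

Lemma zsum_window (V : nmodType) N (f : int -> V) (c : int) (M : nat) :
  c <= N%:Z -> - N%:Z <= c - M%:Z + 1 ->
  (forall r, (r <= c - M%:Z) || (c < r) -> f r = 0) ->
  zsum N f = \sum_(0 <= i < M) f (c - i%:Z).
Proof.
move=> cN Mc fc; set d := `|N%:Z - c|%N.
have dE : d%:Z = N%:Z - c by rewrite /d; lia.
rewrite /zsum big_nat_rev /= (eq_big_nat _ _ (F2 := fun i => f (N%:Z - i%:Z))); last first.
  by move=> i /andP[_ iN]; congr f; lia.
rewrite (@big_nat_shift _ _ d); [|lia|by move=> j jd; apply: fc; lia].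
rewrite (@big_nat_trunc _ _ M); [|lia|by move=> j jM; apply: fc; lia].
by apply: eq_bigr => i _; congr f; lia.
Qed.

Section QHypergeometric.
Variables (F : fieldType) (q : F).
Hypothesis q_neq0 : q != 0.
Hypothesis q_nroot : forall n, (0 < n)%N -> q ^+ n != 1.

Local Notation P := (qpoch q).
Local Notation I := (qpinv q).
Local Notation Pz := (qpochz q).

Lemma qpoch0 : P 0 = 1.
Proof. by rewrite /qpoch big_geq. Qed.

Lemma qpochS n : P n.+1 = P n * (1 - q ^+ n.+1).
Proof. by rewrite /qpoch big_nat_recr. Qed.

Lemma qpochE n : P n = \prod_(0 <= t < n) (1 - q * q ^+ t).
Proof. by rewrite /qpoch big_add1; apply: eq_bigr => t _; rewrite exprS. Qed.

Lemma qpoch_factor_neq0 n : (0 < n)%N -> 1 - q ^+ n != 0.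
Proof. by move=> /q_nroot; rewrite subr_eq0 eq_sym. Qed.

Lemma qpoch_neq0 n : P n != 0.
Proof.
elim: n => [|n IH]; first by rewrite qpoch0 oner_neq0.
by rewrite qpochS mulf_neq0 // qpoch_factor_neq0.
Qed.

Lemma qpinv_lt0 (x : int) : x < 0 -> I x = 0.
Proof. by case: x. Qed.

Lemma qpinv_pred (x y : int) : y = x - 1 -> I y = (1 - q ^ x) * I x.
Proof.
move=> ->; case: x => [[|n]|n]; first by rewrite expr0z subrr mul0r.
- rewrite (_ : _ - 1 = n%:Z) /=; last by lia.
  by rewrite qpochS invfM mulrCA [q ^ _]/(q ^+ n.+1) mulfV ?mulr1 // qpoch_factor_neq0.
- by rewrite qpinv_lt0 ?mulr0 //; lia.
Qed.

Lemma expfz_natB (m n : nat) : q ^ (m%:Z - n%:Z) = q ^+ m / q ^+ n.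
Proof. by rewrite expfzDr // -exprnN. Qed.

Definition saal_term a b c s j : F :=
  q ^+ (j * j + s * j) * P (a + b + c + s - j) * I (a%:Z - j%:Z)
  * I (b%:Z - j%:Z) * I (c%:Z - j%:Z) * I j%:Z * I (s + j)%N%:Z.

(* Found by Zeilberger's algorithm in [c]; [vand_cert] below is its analogue in [b]. *)
Definition saal_cert a b c s j : F :=
  - (q ^+ c.+1 / q ^+ j) * (1 - q ^+ j) * (1 - q ^+ (s + j)) * saal_term a b c.+1 s j.

Lemma saal_term_eq0 a b c s j : (c < j)%N -> saal_term a b c s j = 0.
Proof. by move=> cj; rewrite /saal_term (@qpinv_lt0 (c%:Z - j%:Z)) ?mulr0 ?mul0r //; lia. Qed.

Lemma saal_telescoping a b c s j :
  (1 - q ^+ c.+1) * (1 - q ^+ (c + s).+1) * saal_term a b c.+1 s j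
  - (1 - q ^+ (a + c + s).+1) * (1 - q ^+ (b + c + s).+1) * saal_term a b c s j
  = saal_cert a b c s j.+1 - saal_cert a b c s j.
Proof.
rewrite /saal_cert /saal_term; case: (leqP j a) => ja; last first.
  rewrite (@qpinv_lt0 (a%:Z - j%:Z)) 1?(@qpinv_lt0 (a%:Z - j.+1%:Z)).
  - by rewrite !(mulr0, mul0r) subrr.
  - by lia.
  - by lia.
rewrite (_ : (a + b + c.+1 + s - j = (a + b + c + s - j).+1)%N); last by lia.
rewrite (_ : (a + b + c.+1 + s - j.+1 = a + b + c + s - j)%N); last by lia.
have qU : q \is a GRing.unit by rewrite unitfE.
rewrite qpochS [q ^+ (_ - j).+1]exprS (exprB _ qU); last by lia.
rewrite (@qpinv_pred (a%:Z - j%:Z) (a%:Z - j.+1%:Z)); last by lia.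
rewrite (@qpinv_pred (b%:Z - j%:Z) (b%:Z - j.+1%:Z)); last by lia.
rewrite (@qpinv_pred (c.+1%:Z - j%:Z) (c.+1%:Z - j.+1%:Z)); last by lia.
rewrite (@qpinv_pred (c.+1%:Z - j%:Z) (c%:Z - j%:Z)); last by lia.
rewrite (@qpinv_pred j.+1%:Z j%:Z); last by lia.
rewrite (@qpinv_pred (s + j.+1)%N%:Z (s + j)%N%:Z); last by lia.
rewrite !expfz_natB -!exprnP.
rewrite (_ : (j.+1 * j.+1 + s * j.+1 = (j * j + s * j) + (j + j + 1 + s))%N); last by lia.
rewrite !(addnS, addSn, exprS, exprD, expr1, expr0).
have := expf_neq0 j q_neq0; move: (q ^+ j) => x x0.
by field; rewrite x0 q_neq0.
Qed.

Lemma q_saalschutz a b c s :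
  \sum_(0 <= j < c.+1) saal_term a b c s j
  = P (a + b + s) * P (a + c + s) * P (b + c + s)
    / (P a * P (a + s) * P b * P (b + s) * P c * P (c + s)).
Proof.
elim: c => [|c IH].
  rewrite big_nat1 /saal_term /= !(addn0, add0n, muln0, subn0, qpoch0) mul1r.
  by field; rewrite ?qpoch_neq0 ?oner_neq0.
have cert0 : saal_cert a b c s 0 = 0 by rewrite /saal_cert subrr !(mulr0, mul0r).
have certM : saal_cert a b c s c.+3 = 0 by rewrite /saal_cert saal_term_eq0 ?mulr0 //; lia.
have := creative_telescoping (saal_telescoping a b c s) cert0 certM.
have trunc d K : (d < K)%N -> (K <= c.+3)%N ->
    \sum_(0 <= j < c.+3) saal_term a b d s j = \sum_(0 <= j < K) saal_term a b d s j.
  by move=> dK Kc; apply: big_nat_trunc => // j /(leq_trans dK); apply: saal_term_eq0.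
rewrite (trunc c.+1 c.+2) // (trunc c c.+1 _ (leqW (leqnSn _))) // IH => tele.
have alpha0 : (1 - q ^+ c.+1) * (1 - q ^+ (c + s).+1) != 0 by rewrite mulf_neq0 ?qpoch_factor_neq0.
apply: (mulfI alpha0); rewrite tele !(addnS, addSn, qpochS).
by field; rewrite ?qpoch_neq0 ?qpoch_factor_neq0.
Qed.

Definition vand_term a b s j : F :=
  q ^+ (j * j + s * j) * I (a%:Z - j%:Z) * I (b%:Z - j%:Z) * I j%:Z * I (s + j)%N%:Z.

Definition vand_cert a b s j : F :=
  - (q ^+ b.+1 / q ^+ j) * (1 - q ^+ j) * (1 - q ^+ (s + j)) * vand_term a b.+1 s j.

Lemma vand_term_eq0 a b s j : (b < j)%N -> vand_term a b s j = 0.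
Proof. by move=> bj; rewrite /vand_term (@qpinv_lt0 (b%:Z - j%:Z)) ?mulr0 ?mul0r //; lia. Qed.

Lemma vand_telescoping a b s j :
  (1 - q ^+ b.+1) * (1 - q ^+ (b + s).+1) * vand_term a b.+1 s j
  - (1 - q ^+ (a + b + s).+1) * vand_term a b s j
  = vand_cert a b s j.+1 - vand_cert a b s j.
Proof.
rewrite /vand_cert /vand_term; case: (leqP j a) => ja; last first.
  rewrite (@qpinv_lt0 (a%:Z - j%:Z)) 1?(@qpinv_lt0 (a%:Z - j.+1%:Z)).
  - by rewrite !(mulr0, mul0r) subrr.
  - by lia.
  - by lia.
rewrite (@qpinv_pred (a%:Z - j%:Z) (a%:Z - j.+1%:Z)); last by lia.
rewrite (@qpinv_pred (b.+1%:Z - j%:Z) (b.+1%:Z - j.+1%:Z)); last by lia.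
rewrite (@qpinv_pred (b.+1%:Z - j%:Z) (b%:Z - j%:Z)); last by lia.
rewrite (@qpinv_pred j.+1%:Z j%:Z); last by lia.
rewrite (@qpinv_pred (s + j.+1)%N%:Z (s + j)%N%:Z); last by lia.
rewrite !expfz_natB -!exprnP.
rewrite (_ : (j.+1 * j.+1 + s * j.+1 = (j * j + s * j) + (j + j + 1 + s))%N); last by lia.
rewrite !(addnS, addSn, exprS, exprD, expr1, expr0).
have := expf_neq0 j q_neq0; move: (q ^+ j) => x x0.
by field; rewrite x0 q_neq0.
Qed.

Lemma q_chu_vandermonde a b s :
  \sum_(0 <= j < b.+1) vand_term a b s j = P (a + b + s) / (P a * P (a + s) * P b * P (b + s)).
Proof.
elim: b => [|b IH].
  rewrite big_nat1 /vand_term /= !(addn0, add0n, muln0, subn0, qpoch0) mul1r.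
  by field; rewrite ?qpoch_neq0 ?oner_neq0.
have cert0 : vand_cert a b s 0 = 0 by rewrite /vand_cert subrr !(mulr0, mul0r).
have certM : vand_cert a b s b.+3 = 0 by rewrite /vand_cert vand_term_eq0 ?mulr0 //; lia.
have := creative_telescoping (vand_telescoping a b s) cert0 certM.
have trunc d K : (d < K)%N -> (K <= b.+3)%N ->
    \sum_(0 <= j < b.+3) vand_term a d s j = \sum_(0 <= j < K) vand_term a d s j.
  by move=> dK Kb; apply: big_nat_trunc => // j /(leq_trans dK); apply: vand_term_eq0.
rewrite (trunc b.+1 b.+2) // (trunc b b.+1 _ (leqW (leqnSn _))) // IH => tele.
have alpha0 : (1 - q ^+ b.+1) * (1 - q ^+ (b + s).+1) != 0 by rewrite mulf_neq0 ?qpoch_factor_neq0.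
apply: (mulfI alpha0); rewrite tele !(addnS, addSn, qpochS).
by field; rewrite ?qpoch_neq0 ?qpoch_factor_neq0.
Qed.

Definition qbin_sum n (z : F) : F :=
  \sum_(0 <= i < n.+1) (-1) ^+ i * q ^+ 'C(i, 2) * z ^+ i * I i%:Z * I (n%:Z - i%:Z).

Lemma qpinv_pascal n (i : nat) :
  (1 - q ^+ n.+1) * (I i%:Z * I (n.+1%:Z - i%:Z))
  = q ^+ i * (I i%:Z * I (n%:Z - i%:Z)) + I (i%:Z - 1) * I (n.+1%:Z - i%:Z).
Proof.
rewrite (@qpinv_pred (n.+1%:Z - i%:Z) (n%:Z - i%:Z)); last by lia.
rewrite (@qpinv_pred i%:Z (i%:Z - 1)) // expfz_natB -exprnP.
have := expf_neq0 i q_neq0; move: (q ^+ i) => x x0.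
by field; rewrite x0.
Qed.

Lemma qbin_sumS n z : (1 - q ^+ n.+1) * qbin_sum n.+1 z = (1 - z) * qbin_sum n (q * z).
Proof.
rewrite /qbin_sum mulr_sumr (eq_bigr (fun i =>
    (-1) ^+ i * q ^+ 'C(i, 2) * (q * z) ^+ i * I i%:Z * I (n%:Z - i%:Z)
    + (-1) ^+ i * q ^+ 'C(i, 2) * z ^+ i * I (i%:Z - 1) * I (n.+1%:Z - i%:Z))); last first.
  move=> i _; rewrite -[_ * I _ * I _]mulrA mulrCA qpinv_pascal exprMn; ring.
rewrite big_split big_nat_recr //= [X in _ + X = _]big_nat_recl //=.
rewrite (@qpinv_lt0 (n%:Z - n.+1%:Z)) ?(@qpinv_lt0 (0%:Z - 1)) //; last by lia.
rewrite !(mulr0, mul0r, addr0, add0r) mulrBl mul1r.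
congr (_ + _); rewrite -mulNr mulr_sumr; apply: eq_bigr => i _.
rewrite subSS subn0 (_ : n.+1%:Z - i.+1%:Z = n%:Z - i%:Z); last by lia.
rewrite binS bin1 !exprS exprD exprMn; ring.
Qed.

Lemma q_binomial n z : qbin_sum n z = \prod_(0 <= t < n) (1 - z * q ^+ t) / P n.
Proof.
rewrite -[qbin_sum n z](mulKf (qpoch_neq0 n)) mulrC; congr (_ * _).
elim: n z => [|n IH] z.
  by rewrite /qbin_sum big_nat1 big_geq //= !expr0 qpoch0 invr1 !mulr1.
rewrite qpochS -mulrA qbin_sumS mulrCA IH big_nat_recl //= expr0 mulr1.
by congr (_ * _); apply: eq_bigr => t _; rewrite exprS mulrA (mulrC z).
Qed.

Definition qpair (e : nat) (x r : int) : F := I (x - r) * I (x + r + e%:Z).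

Lemma qpair_orthogonal j e N : (j + e <= N)%N ->
  zsum N (fun r => (-1) ^ r * q ^ bin2z r * qpair e j r) = (j == 0%N)%:R.
Proof.
move=> jeN.
have supp (r : int) : (r <= j%:Z - (2 * j + e).+1%:Z) || (j%:Z < r) ->
    (-1) ^ r * q ^ bin2z r * qpair e j r = 0.
  case/orP=> [lo|hi]; rewrite /qpair.
    by rewrite (@qpinv_lt0 (j%:Z + r + e%:Z)) ?mulr0 //; lia.
  by rewrite (@qpinv_lt0 (j%:Z - r)) ?(mulr0, mul0r) //; lia.
rewrite (zsum_window _ _ supp); [|lia|lia].
rewrite (eq_bigr (fun i => (-1) ^+ j * q ^ bin2z j * ((-1) ^+ i * q ^+ 'C(i, 2)
    * (q ^ (1 - j%:Z)) ^+ i * I i%:Z * I ((2 * j + e)%N%:Z - i%:Z)))); last first.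
  move=> i _; rewrite /qpair bin2zB (_ : j%:Z - (j%:Z - i%:Z) = i%:Z); last by lia.
  rewrite (_ : j%:Z + (j%:Z - i%:Z) + e%:Z = (2 * j + e)%N%:Z - i%:Z); last by lia.
  rewrite [(-1) ^ _]expfzDr ?oppr_eq0 ?oner_eq0 // -exprnN invr_sign.
  rewrite [q ^ _]expfzDr // [q ^ (_ + _)]expfzDr // [i%:Z * _]mulrC -exprz_exp -!exprnP.
  ring.
(* q-binomial theorem at z = q^(1-j): for j > 0 the factor t = j - 1 vanishes. *)
rewrite -mulr_sumr -/(qbin_sum _ _) q_binomial.
clear supp; case: j jeN => [|j] _ /=.
  by rewrite muln0 add0n bin0n subr0 expr1z !expr0 expr0z !mul1r -qpochE divff ?qpoch_neq0.
rewrite (big_cat_nat (leq0n j)) /=; last by lia.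
rewrite [\prod_(j <= t < _) _]big_ltn; last by lia.
have factor1 : q ^ (1 - j.+1%:Z) * q ^+ j = 1.
  rewrite (_ : 1 - j.+1%:Z = 0%:Z - j%:Z); last by lia.
  by rewrite expfz_natB mul1r mulVf ?expf_neq0.
by rewrite factor1 subrr !(mul0r, mulr0).
Qed.

Lemma qpair_reflect e (x r : int) : qpair e x (- r - e%:Z) = qpair e x r.
Proof. by rewrite /qpair mulrC; congr (I _ * I _); lia. Qed.

Lemma qpair_eq0 e (x t : nat) : (x < t)%N -> qpair e x%:Z t%:Z = 0.
Proof. by move=> xt; rewrite /qpair qpinv_lt0 ?mul0r //; lia. Qed.

Lemma qpinv_or_qpair_eq0 e (a j t : nat) :
  (a < t)%N -> I (a%:Z - j%:Z) = 0 \/ qpair e j%:Z t%:Z = 0.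
Proof.
move=> at_; case: (ltnP j t) => jt; first by right; apply: qpair_eq0.
by left; apply: qpinv_lt0; lia.
Qed.

Lemma sum_qpair_shift (w : nat -> F) e (t M : nat) : (t <= M)%N ->
  \sum_(0 <= j < M.+1) w j * qpair e j%:Z t%:Z
  = \sum_(0 <= i < (M - t).+1) w (t + i)%N * (I i%:Z * I (2 * t + e + i)%N%:Z).
Proof.
move=> tM; rewrite (big_nat_shift (leqW tM)) => [|j jt]; last by rewrite qpair_eq0 ?mulr0.
rewrite subSn //; apply: eq_bigr => i _; rewrite /qpair; congr (_ * (I _ * I _)); lia.
Qed.

Lemma q_chu_vandermonde_pair u k e r : (e <= 1)%N ->
  \sum_(0 <= j < k.+1) q ^+ (j * j + e * j) * I (u%:Z - j%:Z) * I (k%:Z - j%:Z) * qpair e j r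
  = q ^ (r * r + e%:Z * r) * P (u + k + e) * qpair e u r * qpair e k r.
Proof.
move=> e1; move: r; apply: (int_reflect_ind e1) => [t|r]; last first.
  rewrite !qpair_reflect (_ : (- r - e%:Z) * (- r - e%:Z) + e%:Z * (- r - e%:Z) = r * r + e%:Z * r).
    by move=> <-; apply: eq_bigr => j _; rewrite qpair_reflect.
  by ring.
have [kt|tk] := ltnP k t.
  rewrite (qpair_eq0 e kt) mulr0 big1 // => j _.
  by case: (qpinv_or_qpair_eq0 e j kt) => ->; rewrite !(mulr0, mul0r).
have [ut|tu] := ltnP u t.
  rewrite (qpair_eq0 e ut) mulr0 mul0r big1 // => j _.
  by case: (qpinv_or_qpair_eq0 e j ut) => ->; rewrite !(mulr0, mul0r).
rewrite (sum_qpair_shift (fun j => q ^+ (j * j + e * j) * I (u%:Z - j%:Z) * I (k%:Z - j%:Z))) //.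
rewrite (eq_bigr (fun i => q ^+ (t * t + e * t) * vand_term (u - t) (k - t) (2 * t + e) i)).
  rewrite -mulr_sumr q_chu_vandermonde /qpair.
  rewrite (_ : t%:Z * t%:Z + e%:Z * t%:Z = (t * t + e * t)%N%:Z) -?exprnP; last first.
    by rewrite PoszD !PoszM.
  rewrite (_ : u%:Z - t%:Z = (u - t)%N%:Z); last by lia.
  rewrite (_ : k%:Z - t%:Z = (k - t)%N%:Z); last by lia.
  rewrite (_ : u%:Z + t%:Z + e%:Z = (u - t + (2 * t + e))%N%:Z); last by lia.
  rewrite (_ : k%:Z + t%:Z + e%:Z = (k - t + (2 * t + e))%N%:Z); last by lia.
  rewrite (_ : (u - t + (k - t) + (2 * t + e) = u + k + e)%N) /=; last by lia.
  by field; rewrite ?qpoch_neq0.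
move=> i _; rewrite /vand_term.
rewrite (_ : ((t + i) * (t + i) + e * (t + i)
  = (t * t + e * t) + (i * i + (2 * t + e) * i))%N); last by nia.
rewrite (_ : u%:Z - (t + i)%N%:Z = (u - t)%N%:Z - i%:Z); last by lia.
rewrite (_ : k%:Z - (t + i)%N%:Z = (k - t)%N%:Z - i%:Z); last by lia.
rewrite exprD; ring.
Qed.

Lemma q_saalschutz_pair l m n e r : (e <= 1)%N ->
  \sum_(0 <= k < n.+1) q ^+ (k * k + e * k) * Pz (l%:Z + m%:Z + n%:Z - k%:Z + e%:Z)
    * (I (l%:Z - k%:Z) * I (m%:Z - k%:Z) * I (n%:Z - k%:Z)) * qpair e k r
  = q ^ (r * r + e%:Z * r) * P (l + m + e) * P (l + n + e) * P (m + n + e)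
    * (qpair e l r * qpair e m r * qpair e n r).
Proof.
move=> e1; move: r; apply: (int_reflect_ind e1) => [t|r]; last first.
  rewrite !qpair_reflect (_ : (- r - e%:Z) * (- r - e%:Z) + e%:Z * (- r - e%:Z) = r * r + e%:Z * r).
    by move=> <-; apply: eq_bigr => j _; rewrite qpair_reflect.
  by ring.
case: (boolP [|| l < t, m < t | n < t]%N) => [small|].
  rewrite big1 => [|k _].
    by case/or3P: small => /(qpair_eq0 e) ->; rewrite !(mulr0, mul0r).
  by case/or3P: small => /(qpinv_or_qpair_eq0 e k) [] ->; rewrite !(mulr0, mul0r).
rewrite !negb_or -!leqNgt => /and3P[tl tm tn].
rewrite (sum_qpair_shift (fun k => q ^+ (k * k + e * k) * Pz (l%:Z + m%:Z + n%:Z - k%:Z + e%:Z)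
  * (I (l%:Z - k%:Z) * I (m%:Z - k%:Z) * I (n%:Z - k%:Z)))) //.
rewrite (eq_big_nat _ _ (F2 := fun i =>
  q ^+ (t * t + e * t) * saal_term (l - t) (m - t) (n - t) (2 * t + e) i)).
  rewrite -mulr_sumr q_saalschutz /qpair.
  rewrite (_ : t%:Z * t%:Z + e%:Z * t%:Z = (t * t + e * t)%N%:Z) -?exprnP; last first.
    by rewrite PoszD !PoszM.
  rewrite (_ : l%:Z - t%:Z = (l - t)%N%:Z); last by lia.
  rewrite (_ : m%:Z - t%:Z = (m - t)%N%:Z); last by lia.
  rewrite (_ : n%:Z - t%:Z = (n - t)%N%:Z); last by lia.
  rewrite (_ : l%:Z + t%:Z + e%:Z = (l - t + (2 * t + e))%N%:Z); last by lia.
  rewrite (_ : m%:Z + t%:Z + e%:Z = (m - t + (2 * t + e))%N%:Z); last by lia.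
  rewrite (_ : n%:Z + t%:Z + e%:Z = (n - t + (2 * t + e))%N%:Z); last by lia.
  rewrite (_ : (l - t + (m - t) + (2 * t + e) = l + m + e)%N); last by lia.
  rewrite (_ : (l - t + (n - t) + (2 * t + e) = l + n + e)%N); last by lia.
  rewrite (_ : (m - t + (n - t) + (2 * t + e) = m + n + e)%N) /=; last by lia.
  by field; rewrite ?qpoch_neq0.
move=> i /andP[_ ilt]; rewrite /saal_term.
rewrite (_ : ((t + i) * (t + i) + e * (t + i)
  = (t * t + e * t) + (i * i + (2 * t + e) * i))%N); last by nia.
rewrite (_ : l%:Z + m%:Z + n%:Z - (t + i)%N%:Z + e%:Z
  = (l - t + (m - t) + (n - t) + (2 * t + e) - i)%N%:Z); last by lia.
rewrite (_ : l%:Z - (t + i)%N%:Z = (l - t)%N%:Z - i%:Z); last by lia.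
rewrite (_ : m%:Z - (t + i)%N%:Z = (m - t)%N%:Z - i%:Z); last by lia.
rewrite (_ : n%:Z - (t + i)%N%:Z = (n - t)%N%:Z - i%:Z); last by lia.
rewrite exprD /=; ring.
Qed.

Lemma bailey_pair u k e N : (e <= 1)%N -> (k + e <= N)%N ->
  I k%:Z * I (u%:Z + k%:Z + e%:Z) = P u * zsum N (fun r =>
    (-1) ^ r * q ^ bin2z r * q ^ (r * r + e%:Z * r) * qpair e u r * qpair e k r).
Proof.
move=> e1 keN.
pose w j := q ^+ (j * j + e * j) * I (u%:Z - j%:Z) * I (k%:Z - j%:Z).
have inversion : \sum_(0 <= j < k.+1) w j * zsum N (fun r => (-1) ^ r * q ^ bin2z r * qpair e j r)
    = I u%:Z * I k%:Z.
  rewrite (eq_big_nat _ _ (F2 := fun j => w j * (j == 0%N)%:R)) => [|j /andP[_ jk]]; last first.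
    by rewrite qpair_orthogonal //; lia.
  rewrite big_nat_recl // big1 => [|j _]; last by rewrite mulr0.
  by rewrite /w addr0 mulr1 !subr0 !(muln0, addn0) expr0 mul1r.
have expansion : zsum N (fun r =>
    (-1) ^ r * q ^ bin2z r * q ^ (r * r + e%:Z * r) * qpair e u r * qpair e k r)
    = (P (u + k + e))^-1 * \sum_(0 <= j < k.+1) w j
      * zsum N (fun r => (-1) ^ r * q ^ bin2z r * qpair e j r).
  rewrite /zsum; under [in RHS]eq_bigr do rewrite mulr_sumr.
  rewrite exchange_big mulr_sumr; apply: eq_bigr => i _ /=; set r := _ - _.
  rewrite (eq_bigr (fun j => (-1) ^ r * q ^ bin2z r * (w j * qpair e j r))); last first.
    by move=> j _; ring.
  rewrite -mulr_sumr q_chu_vandermonde_pair //.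
  by field; rewrite qpoch_neq0.
rewrite (_ : P u * _ = P u * ((P (u + k + e))^-1 * (I u%:Z * I k%:Z))); last first.
  by rewrite expansion inversion.
rewrite (_ : u%:Z + k%:Z + e%:Z = (u + k + e)%N%:Z) //=.
by field; rewrite !qpoch_neq0.
Qed.

Lemma finite_bailey_identity l m n u e N : (e <= 1)%N -> (n < N)%N ->
  \sum_(0 <= k < N) q ^+ (k * k + e * k) * Pz (l%:Z + m%:Z + n%:Z - k%:Z + e%:Z)
    * I k%:Z * I (l%:Z - k%:Z) * I (m%:Z - k%:Z) * I (n%:Z - k%:Z) * I (u%:Z + k%:Z + e%:Z)
  = zsum N (fun r => (-1) ^ r * q ^ (bin2z r + 2 * (r * r + e%:Z * r))
      * P (l + m + e) * P (l + n + e) * P (m + n + e) * P u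
      * qpair e l r * qpair e m r * qpair e n r * qpair e u r).
Proof.
move=> e1 nN.
pose v k := q ^+ (k * k + e * k) * Pz (l%:Z + m%:Z + n%:Z - k%:Z + e%:Z)
  * (I (l%:Z - k%:Z) * I (m%:Z - k%:Z) * I (n%:Z - k%:Z)).
rewrite (eq_big_nat _ _ (F2 := fun k => v k * (P u * zsum N (fun r =>
    (-1) ^ r * q ^ bin2z r * q ^ (r * r + e%:Z * r) * qpair e u r * qpair e k r))))
  => [|k /andP[_ kN]]; last first.
  by rewrite -(bailey_pair u e1) /v; [ring | lia].
rewrite /zsum; under eq_bigr do rewrite !mulr_sumr.
rewrite exchange_big; apply: eq_bigr => i _ /=; set r := _ - _.
rewrite (eq_bigr (fun k => P u * ((-1) ^ r * q ^ bin2z r * q ^ (r * r + e%:Z * r))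
  * qpair e u r * (v k * qpair e k r))); last by move=> k _; ring.
rewrite -mulr_sumr (@big_nat_trunc _ _ n.+1) // => [|k nk]; last first.
  by rewrite /v (@qpinv_lt0 (n%:Z - k%:Z)) ?(mulr0, mul0r) //; lia.
rewrite /v q_saalschutz_pair // (_ : 2 * _ = (r * r + e%:Z * r) + (r * r + e%:Z * r)); last by ring.
rewrite !(@expfzDr _ q) //.
ring.
Qed.

End QHypergeometric.

Theorem corollary5p3 (R : realType) (q : R[i]) (l m n u : nat)
  (hq0 : 0 < `|q|) (hq1 : `|q| < 1) :
  let N := (l + m + n + u).+1 in
  (\sum_(0 <= k < N)
      q ^+ (k * k) * qpochz q (l%:Z + m%:Z + n%:Z - k%:Z)
      * qpinv q k%:Z * qpinv q (l%:Z - k%:Z) * qpinv q (m%:Z - k%:Z)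
      * qpinv q (n%:Z - k%:Z) * qpinv q (u%:Z + k%:Z)
   = zsum N (fun k : int =>
      (-1) ^ k * q ^ ((5 * k ^+ 2 - k) %/ 2)%Z
      * qpoch q (l + m) * qpoch q (l + n) * qpoch q (m + n) * qpoch q u
      * qpinv q (l%:Z - k) * qpinv q (m%:Z - k) * qpinv q (n%:Z - k)
      * qpinv q (u%:Z - k) * qpinv q (l%:Z + k) * qpinv q (m%:Z + k)
      * qpinv q (n%:Z + k) * qpinv q (u%:Z + k)))
  /\
  (\sum_(0 <= k < N)
      q ^+ (k * k + k) * qpochz q (l%:Z + m%:Z + n%:Z - k%:Z + 1)
      * qpinv q k%:Z * qpinv q (l%:Z - k%:Z) * qpinv q (m%:Z - k%:Z)
      * qpinv q (n%:Z - k%:Z) * qpinv q (u%:Z + k%:Z + 1)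
   = zsum N (fun k : int =>
      (-1) ^ k * q ^ ((5 * k ^+ 2 + 3 * k) %/ 2)%Z
      * qpoch q (l + m).+1 * qpoch q (l + n).+1 * qpoch q (m + n).+1
      * qpoch q u
      * qpinv q (l%:Z - k) * qpinv q (m%:Z - k) * qpinv q (n%:Z - k)
      * qpinv q (u%:Z - k) * qpinv q (l%:Z + k + 1) * qpinv q (m%:Z + k + 1)
      * qpinv q (n%:Z + k + 1) * qpinv q (u%:Z + k + 1))).
Proof.
move=> N.
have q_neq0 : q != 0 by rewrite -normr_gt0.
have q_nroot k : (0 < k)%N -> q ^+ k != 1.
  move=> k0; apply: contraTneq hq1 => qk1.
  by rewrite -(expr_lt1 k0 (normr_ge0 q)) -normrX qk1 normr1 ltxx.
have nN : (n < N)%N by rewrite /N; lia.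
split.
- apply: etrans (etrans _ (finite_bailey_identity q_neq0 q_nroot l m u (isT : (0 <= 1)%N) nN)) _.
    by apply: eq_bigr => k _; rewrite mul0n !addn0 !addr0.
  apply: eq_zsum => r; rewrite /qpair !addn0 !addr0 -bin2z_divz.
  rewrite (_ : 5 * r ^+ 2 - r = r * (r - 1) + 2 * (r * r + 0%:Z * r) * 2); last by ring.
  ring.
- apply: etrans (etrans _ (finite_bailey_identity q_neq0 q_nroot l m u (isT : (1 <= 1)%N) nN)) _.
    by apply: eq_bigr => k _; rewrite mul1n.
  apply: eq_zsum => r; rewrite /qpair !addn1 -bin2z_divz.
  rewrite (_ : 5 * r ^+ 2 + 3 * r = r * (r - 1) + 2 * (r * r + 1%:Z * r) * 2); last by ring.
  ring.
Qed.
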